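(* Let $\mathcal{R}$ be a cell space with finite stabiliser $G_0$, let $(F_i)_{i\in I}$ be a right Følner net in $\mathcal{R}$ indexed by a directed set $(I,\leq)$, let $E,E'$ be finite subsets of $G/G_0$, and let $T$ be an $(E,E')$-tiling of $\mathcal{R}$. Then there exist a real number $\varepsilon>0$ and an index $i_0\in I$ such that for every $i\in I$ with $i\geq i_0$ we have $|T\cap F_i^{-E}|\geq\varepsilon|F_i|$.
   Context: A cell space $\mathcal{R}$ consists of a group $G$ acting transitively on the left on a nonempty set $M$ via $\triangleright$, a point $m_0\in M$ and a family $(g_{m_0,m})_{m\in M}$ in $G$ with $g_{m_0,m}\triangleright m_0=m$. $G_0$ is the stabiliser of $m_0$ and $G/G_0$ the set of left cosets. The right semi-action $\triangleleft\colon M\times G/G_0\to M$ is $m\triangleleft gG_0=g_{m_0,m}g\triangleright m_0$; for $E\subseteq G/G_0$, $m\triangleleft E=\{m\triangleleft e:e\in E\}$. For $A\subseteq M$, $A^{-E}=\{m\in M: m\triangleleft E\subseteq A\}$. A right Følner net in $\mathcal{R}$ is a net $(F_i)_{i\in I}$ of nonempty finite subsets of $M$ with $\lim_{i}\frac{|F_i\setminus\{m: m\triangleleft\mathfrak{g}\in F_i\}|}{|F_i|}=0$ for every $\mathfrak{g}\in G/G_0$. For $E,E'\subseteq G/G_0$, a subset $T\subseteq M$ is an $(E,E')$-tiling of $\mathcal{R}$ if $(t\triangleleft E)_{t\in T}$ is pairwise disjoint and $(t\triangleleft E')_{t\in T}$ covers $M$. *)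

From HB Require Import structures.
From mathcomp Require Import all_boot all_order all_algebra.
From mathcomp Require Import finmap.
From mathcomp Require Import boolp reals.
From Stdlib Require Import List.

Set Implicit Arguments.
Unset Strict Implicit.
Unset Printing Implicit Defensive.

Import Order.TTheory GRing.Theory Num.Theory.
Local Open Scope fset_scope.
Local Open Scope ring_scope.

Record cell_space := CellSpace {
  cs_G : Type;
  cs_mul : cs_G -> cs_G -> cs_G;
  cs_one : cs_G;
  cs_inv : cs_G -> cs_G;
  cs_mulA : forall x y z, cs_mul x (cs_mul y z) = cs_mul (cs_mul x y) z;
  cs_mul1g : forall x, cs_mul cs_one x = x;
  cs_mulVg : forall x, cs_mul (cs_inv x) x = cs_one;
  cs_M : choiceType;
  cs_act : cs_G -> cs_M -> cs_M;
  cs_act1 : forall m, cs_act cs_one m = m;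
  cs_actM : forall g h m, cs_act (cs_mul g h) m = cs_act g (cs_act h m);
  cs_trans : forall m m', exists g, cs_act g m = m';
  cs_m0 : cs_M;
  cs_gm : cs_M -> cs_G;
  cs_gmP : forall m, cs_act (cs_gm m) cs_m0 = m
}.

Section CellSpaceDefs.
Variable C : cell_space.
Local Notation G := (cs_G C).
Local Notation M := (cs_M C).

Definition finite_stabiliser : Prop :=
  exists s : list G, forall g, cs_act g (cs_m0 C) = cs_m0 C <-> In g s.

(* Right semi-action  m <| gG0 := g_{m0,m} g |> m0 ; the coset gG0 is given
   by a representative g (the value does not depend on the representative). *)
Definition rsemi (m : M) (g : G) : M := cs_act (cs_mul (cs_gm m) g) (cs_m0 C).

(* Finite subsets E of G/G0 are given by finite lists of representatives. *)
Definition rsemi_set (m : M) (E : list G) : M -> Prop :=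
  fun x => exists2 e, In e E & x = rsemi m e.

Definition shrink (A : M -> Prop) (E : list G) : M -> Prop :=
  fun m => forall e, In e E -> A (rsemi m e).

Definition is_tiling (E E' : list G) (T : M -> Prop) : Prop :=
  (forall t t', T t -> T t' -> t <> t' ->
     forall x, rsemi_set t E x -> rsemi_set t' E x -> False) /\
  (forall m, exists2 t, T t & rsemi_set t E' m).

Definition directed (I : Type) (le : I -> I -> Prop) : Prop :=
  inhabited I /\ (forall i, le i i) /\
  (forall i j k, le i j -> le j k -> le i k) /\
  (forall i j, exists k, le i k /\ le j k).

Definition right_folner_net (R : realType) (I : Type) (le : I -> I -> Prop)
    (F : I -> {fset M}) : Prop :=
  (forall i, F i != fset0) /\
  (forall (g : G) (eps : R), 0 < eps -> exists i0, forall i, le i0 i ->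
     (#|` [fset m in F i | rsemi m g \notin F i] |%:R / #|` F i|%:R : R) < eps).

(* |X| >= r for a possibly infinite X subset M : X contains a finite subset
   with at least r elements *)
Definition card_ge (R : realType) (X : M -> Prop) (r : R) : Prop :=
  exists S : {fset M}, (forall x, x \in S -> X x) /\ r <= #|` S|%:R.

End CellSpaceDefs.

From HB Require Import structures.
From mathcomp Require Import all_boot all_order all_algebra.
From mathcomp Require Import finmap.
From mathcomp Require Import boolp reals.
From Stdlib Require Import List.
From mathcomp Require Import zify.

Set Implicit Arguments.
Unset Strict Implicit.
Unset Printing Implicit Defensive.

Import Order.TTheory GRing.Theory Num.Theory.
Local Open Scope ring_scope.
Local Open Scope fset_scope.

(* If m lies in the tile t <| E', then g_{m0,m}^-1 g_{m0,t} e' stabilises m0,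
   so every cell t <| e of that tile is m <| h for h in the finite set
   G0 E'^-1 E. Hence for large i every m in F_i except a small proportion has
   all of its tile's cells in F_i, i.e. the tile's centre lies in F_i^{-E};
   since a tile covers at most |E'| cells, this yields |F_i| / (2|E'|)
   distinct centres in T. *)

Section FiniteSets.
Variables (T : choiceType) (K : Type) (f : T -> K -> T).

Lemma card_imfset_le (B : {fset T}) (k : K) : (#|` [fset f b k | b in B]| <= #|` B|)%N.
Proof.
apply: (leq_trans (leq_imfset_card _ _ _)).
by apply: (uniq_leq_size (enum_finmem_uniq _)) => x; rewrite enum_finmemE.
Qed.

Lemma leq_card_cover (L : list K) (A B : {fset T}) :
  (forall a, a \in A -> exists2 k, In k L & exists2 b, b \in B & a = f b k) ->
  (#|` A| <= size L * #|` B|)%N.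
Proof.
elim: L A => [|k L IHL] A cover /=.
  rewrite mul0n leqn0 cardfs_eq0; apply/eqP/fsetP => a; rewrite inE.
  by apply/negbTE/negP => /cover [].
rewrite -(cardfsID [fset f b k | b in B] A) mulSn leq_add //.
  exact: leq_trans (fsubset_leq_card (fsubsetIr _ _)) (card_imfset_le _ _).
apply: IHL => a; rewrite inE => /andP [aX /cover [k' [<-|k'L] Hb]]; last by exists k'.
by case: Hb aX => b bB -> /negP []; apply/imfsetP; exists b.
Qed.

Lemma leq_mul_sum (L : list K) (g : K -> nat) (c N : nat) :
  (forall k, In k L -> c * g k <= N)%N -> (c * \sum_(k <- L) g k <= size L * N)%N.
Proof.
elim: L => [|k L IHL] gN; first by rewrite big_nil muln0.
rewrite big_cons mulnDr mulSn leq_add //; first by apply: gN; left.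
by apply: IHL => k' k'L; apply: gN; right.
Qed.

Variable F : {fset T}.

Definition boundary (k : K) : {fset T} := [fset x in F | f x k \notin F].

Definition interior (L : list K) : {fset T} := [fset x in F | all (fun k => f x k \in F) L].

Lemma interior_mem L x k : x \in interior L -> In k L -> f x k \in F.
Proof.
rewrite inE => /andP [_]; elim: L => [|k' L IHL] //= /andP [fk' fL] [<-|kL] //.
exact: IHL.
Qed.

Lemma leq_card_interior_boundary L :
  (#|` F| <= #|` interior L| + \sum_(k <- L) #|` boundary k|)%N.
Proof.
elim: L => [|k L IHL].
  rewrite big_nil addn0; apply: fsubset_leq_card.
  by apply/fsubsetP => x xF; rewrite !inE /= andbT.
rewrite big_cons (leq_trans IHL) // addnCA addnA leq_add2r.
apply: leq_trans (leq_card_fsetU _ _).1; apply/fsubset_leq_card/fsubsetP => x.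
rewrite !inE /= => /andP [xF xL]; rewrite xF xL /=.
by case: (f x k \in F).
Qed.

End FiniteSets.

Lemma directed_eventually_forall (I K : Type) (le : I -> I -> Prop) (P : K -> I -> Prop)
    (L : list K) :
  directed le -> (forall k, exists i0, forall i, le i0 i -> P k i) ->
  exists i0, forall i, le i0 i -> forall k, In k L -> P k i.
Proof.
move=> [[i1] [_ [le_trans le_ub]]] evP.
elim: L => [|k L [iL HL]]; first by exists i1.
have [ik Hk] := evP k; have [j [ikj iLj]] := le_ub ik iL.
exists j => i ji k' [<-|k'L]; first exact/Hk/(le_trans _ _ _ ikj ji).
exact: HL (le_trans _ _ _ iLj ji) _ k'L.
Qed.

Section Group.
Variable C : cell_space.
Local Notation mul := (@cs_mul C).
Local Notation inv := (@cs_inv C).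

Lemma cs_mulgV x : mul x (inv x) = cs_one C.
Proof.
rewrite -[LHS]cs_mul1g -{1}(cs_mulVg (inv x)).
by rewrite -cs_mulA (cs_mulA (inv x)) cs_mulVg cs_mul1g cs_mulVg.
Qed.

Lemma cs_mulg1 x : mul x (cs_one C) = x.
Proof. by rewrite -(cs_mulVg x) cs_mulA cs_mulgV cs_mul1g. Qed.

Lemma cs_mulgK x y : mul (mul y x) (inv x) = y.
Proof. by rewrite -cs_mulA cs_mulgV cs_mulg1. Qed.

Lemma cs_mulKVg x y : mul x (mul (inv x) y) = y.
Proof. by rewrite cs_mulA cs_mulgV cs_mul1g. Qed.

End Group.

Section TileShifts.
Variable C : cell_space.
Local Notation G := (cs_G C).
Local Notation M := (cs_M C).
Local Notation mul := (@cs_mul C).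
Local Notation inv := (@cs_inv C).

Definition rebase (m t : M) (e' : G) : G := mul (mul (inv (cs_gm m)) (cs_gm t)) e'.

Lemma rebase_stab m t e' : m = rsemi t e' -> cs_act (rebase m t e') (cs_m0 C) = cs_m0 C.
Proof.
move=> Hm; rewrite /rebase -cs_mulA cs_actM -/(rsemi t e') -Hm.
by rewrite -{2}(cs_gmP m) -cs_actM cs_mulVg cs_act1.
Qed.

Lemma rsemi_rebase m t e' e :
  rsemi t e = rsemi m (mul (mul (rebase m t e') (inv e')) e).
Proof. by rewrite /rsemi /rebase cs_mulgK cs_mulA cs_mulKVg. Qed.

Lemma rsemi_tile_shifts (E E' : list G) :
  finite_stabiliser C ->
  exists H : list G, forall m t e' e, In e' E' -> m = rsemi t e' -> In e E ->
    exists2 h, In h H & rsemi t e = rsemi m h.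
Proof.
move=> [S HS].
exists (flat_map (fun s => flat_map (fun e' =>
          List.map (fun e => mul (mul s (inv e')) e) E) E') S).
move=> m t e' e He' Hm He; exists (mul (mul (rebase m t e') (inv e')) e).
  apply/in_flat_map; exists (rebase m t e'); split; first exact/HS/rebase_stab.
  by apply/in_flat_map; exists e'; split => //; apply/in_map_iff; exists e.
exact: rsemi_rebase.
Qed.

End TileShifts.

Section Folner.
Variables (R : realType) (C : cell_space) (I : Type) (le : I -> I -> Prop).
Variable F : I -> {fset cs_M C}.
Hypotheses (le_directed : directed le) (F_folner : right_folner_net R le F).

Lemma folner_boundary_lt (L : list (cs_G C)) (c : nat) : (0 < c)%N ->
  exists i0, forall i, le i0 i -> forall h, In h L ->
    (c * #|` boundary (@rsemi C) (F i) h| < #|` F i|)%N.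
Proof.
move=> c_gt0; apply: directed_eventually_forall => // h.
have c_inv_gt0 : (0 : R) < c%:R^-1 by rewrite invr_gt0 ltr0n.
have [i0 Hi0] := F_folner.2 h _ c_inv_gt0.
exists i0 => i /Hi0.
by rewrite ltr_pdivrMr ?ltr_pdivlMl ?ltr0n ?cardfs_gt0 ?F_folner.1 // -natrM ltr_nat.
Qed.

Lemma folner_boundary_sum (L : list (cs_G C)) :
  exists i0, forall i, le i0 i ->
    (2 * \sum_(h <- L) #|` boundary (@rsemi C) (F i) h| <= #|` F i|)%N.
Proof.
have [i0 Hi0] := @folner_boundary_lt L (2 * (size L).+1) isT.
exists i0 => i /Hi0 small.
have := leq_mul_sum (fun h hL => ltnW (small h hL)).
nia.
Qed.

End Folner.

Section Tiling.
Variables (C : cell_space) (E' : list (cs_G C)) (T : cs_M C -> Prop).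
Hypothesis T_cover : forall m, exists2 t, T t & rsemi_set t E' m.

Lemma tile_centres_card (A : {fset cs_M C}) :
  exists St : {fset cs_M C},
    (forall t, t \in St -> T t /\ exists2 m, m \in A & rsemi_set t E' m) /\
    (#|` A| <= size E' * #|` St|)%N.
Proof.
have /choice [tile tileP] : forall m, exists t, T t /\ rsemi_set t E' m.
  by move=> m; have [t] := T_cover m; exists t.
exists [fset tile m | m in A]; split.
  by move=> t /imfsetP [m mA ->]; have [Tt Ht] := tileP m; split => //; exists m.
apply: (@leq_card_cover _ _ (@rsemi C)) => m mA.
have [_ [e' He' Hm]] := tileP m.
by exists e' => //; exists (tile m) => //; apply/imfsetP; exists m.
Qed.

End Tiling.

Theorem lemma7 (R : realType) (C : cell_space) (I : Type) (le : I -> I -> Prop)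
    (F : I -> {fset cs_M C}) (E E' : list (cs_G C)) (T : cs_M C -> Prop) :
  finite_stabiliser C ->
  directed le ->
  right_folner_net R le F ->
  is_tiling E E' T ->
  exists eps : R, 0 < eps /\ exists i0 : I, forall i, le i0 i ->
    card_ge (fun m => T m /\ shrink (fun x => x \in F i) E m) (eps * #|` F i|%:R).
Proof.
move=> G0_fin le_directed F_folner [_ T_cover].
have [H HP] := rsemi_tile_shifts E E' G0_fin.
have [i0 Hi0] := folner_boundary_sum le_directed F_folner H.
exists (2 * (size E').+1)%:R^-1; split; first by rewrite invr_gt0 ltr0n.
exists i0 => i /Hi0 bd_small.
have [St [StP St_card]] := tile_centres_card T_cover (interior (@rsemi C) (F i) H).
exists St; split.
  move=> t /StP [Tt [m mA [e' He' Hm]]]; split => // e He.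
  by have [h hH ->] := HP _ _ _ _ He' Hm He; apply: interior_mem mA hH.
rewrite ler_pdivrMl ?ltr0n // -natrM ler_nat.
have := leq_card_interior_boundary (@rsemi C) (F i) H.
nia.
Qed.
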